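(* Let $\epsilon\in(0,1)$, let $K\ge1$, and let $T\ge2$ be an integer. Let $\bar A=[\bar a,\bar b)\times[0,\infty)$ with integers $\bar a<\bar b$. Let $\bar{\mathcal{W}}$ be a finite set of rows of an RCP instance such that every row $W\in\bar{\mathcal{W}}$ spans $\bar A$, i.e., there exist $R,R'\in W$ with $\mathrm{left}(R)\le\bar a$ and $\mathrm{right}(R')\ge\bar b$. For a real $c'>0$ and an integer $p'$, let $\bar{\mathcal{W}}^{c',p'}$ be the set of rows $W\in\bar{\mathcal{W}}$ whose leftmost rectangle $R$ satisfies $c(R)=c'$ and $(1+\epsilon)^{p'}\le p(R)<(1+\epsilon)^{p'+1}$. Let $\mathcal{G}$ be any set of pairs $(c',p')$ containing every pair with $\bar{\mathcal{W}}^{c',p'}\neq\emptyset$. Let $\bar S\subseteq\bigcup_{W\in\bar{\mathcal{W}}}W$ contain a prefix of each row $W\in\bar{\mathcal W}$ (if $R\in\bar S\cap W$ then every $R'\in W$ with $\mathrm{right}(R')\le\mathrm{left}(R)$ is in $\bar S$), and let $\bar n^{c',p'}:=|\{W\in\bar{\mathcal{W}}^{c',p'}:W\cap\bar S\ne\emptyset\}|$. Then there exists a step function $\bar f:\bar A\to\{0,1,\dots,\sum_{R}p(R)\}$ with $O((K|\mathcal{G}|\log T/\epsilon)^2)$ steps such that for all integers $t,s$ with $(t,s)\in\bar A$, $$\bar f(t,s)\le\sum_{R\in\bar S:R\cap L(s,t)\ne\emptyset}p(R)\le\bar f(t,s)+\sum_{(c',p')}(1+\epsilon)^{p'}\left\lfloor\frac{\epsilon}{2K\log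 T}\bar n^{c',p'}\right\rfloor,$$ where the last sum ranges over all pairs $(c',p')$ for which some rectangle in some row of $\bar{\mathcal{W}}^{c',p'}$ intersects $L(s,t)$.
   Context: RCP rectangles and rows: each rectangle is $R=[a,b)\times[j,j+1)$ with $a<b$, $a,b,j\in\mathbb{N}_0$, $\mathrm{left}(R)=a$, $\mathrm{right}(R)=b$, cost $c(R)>0$ and value $p(R)>0$; rectangles are pairwise disjoint; the rectangles with the same $j$ form a row, all rectangles of a row have the same value and are consecutive along the $x$-axis (no gaps). The ray $L(s,t)$ for $s,t\in\mathbb{N}_0$ is $\{t\}\times(-\infty,s]$; a rectangle $[a,b)\times[j,j+1)$ intersects $L(s,t)$ iff $a\le t<b$ and $j\le s$. A step function on $\bar A$ with $k$ steps is a function for which there is a partition of $\bar A$ into $k$ axis-parallel rectangles of the form $[x^L,x^R)\times[y^B,y^T)$ (with $x^L,x^R,y^B\in\mathbb{N}_0$, $y^T\in\mathbb{N}_0\cup\{\infty\}$) on each of which the function is constant. The sum $\sum_R p(R)$ in the codomain is over all rectangles of the rows in $\bar{\mathcal W}$. *)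

From Stdlib Require Import Reals Lra Lia ZArith Arith List.
Import ListNotations.
Open Scope R_scope.

(* A rectangle [rl, rr) x [rj, rj+1) with cost rc (real) and value rp. *)
Record rect := Rect { rl : nat; rr : nat; rj : nat; rc : R; rp : nat }.

(* R intersects the ray L(s,t) = {t} x (-oo, s] *)
Definition hits (Rc : rect) (s t : nat) : bool :=
  (Nat.leb (rl Rc) t && Nat.ltb t (rr Rc) && Nat.leb (rj Rc) s)%bool.

Fixpoint consec (W : list rect) : Prop :=
  match W with
  | R1 :: ((R2 :: _) as W') => rr R1 = rl R2 /\ consec W'
  | _ => True
  end.

Definition row_j (W : list rect) : nat :=
  match W with R1 :: _ => rj R1 | [] => O end.

Definition valid_row (W : list rect) : Prop :=
  W <> [] /\ consec W /\
  (forall Rc, In Rc W -> rj Rc = row_j W) /\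
  (forall Rc Rc', In Rc W -> In Rc' W -> rp Rc = rp Rc') /\
  (forall Rc, In Rc W -> (rl Rc < rr Rc)%nat /\ 0 < rc Rc /\ (0 < rp Rc)%nat).

Definition spans (abar bbar : nat) (W : list rect) : Prop :=
  exists Rc Rc', In Rc W /\ In Rc' W /\ (rl Rc <= abar)%nat /\ (bbar <= rr Rc')%nat.

Definition in_classb (eps c' : R) (p' : Z) (W : list rect) : bool :=
  match W with
  | R1 :: _ =>
      if Req_EM_T (rc R1) c' then
        if Rle_dec (powerRZ (1 + eps) p') (INR (rp R1)) then
          if Rlt_dec (INR (rp R1)) (powerRZ (1 + eps) (p' + 1)) then true
          else false
        else false
      else false
  | [] => false
  end.

Definition nbar (eps c' : R) (p' : Z) (Wbar : list (list rect))
  (Sbar : rect -> bool) : nat :=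
  length (filter (fun W => (in_classb eps c' p' W && existsb Sbar W)%bool) Wbar).

Definition list_sumn (l : list nat) : nat := fold_right Nat.add O l.

Definition sumS (Wbar : list (list rect)) (Sbar : rect -> bool) (s t : nat) : nat :=
  list_sumn (map (fun W => list_sumn (map (fun Rc =>
     if (Sbar Rc && hits Rc s t)%bool then rp Rc else O) W)) Wbar).

Definition total (Wbar : list (list rect)) : nat :=
  list_sumn (map (fun W => list_sumn (map rp W)) Wbar).

Definition log2 (x : R) : R := ln x / ln 2.

Definition err (eps K : R) (T : nat) (Wbar : list (list rect))
  (Sbar : rect -> bool) (G : list (R * Z)) (s t : nat) : R :=
  fold_right Rplus 0 (map (fun g : R * Z =>
    let (c', p') := g in
    if existsb (fun W => (in_classb eps c' p' W && existsb (fun Rc => hits Rc s t) W)%bool) Wbar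
    then powerRZ (1 + eps) p' *
         IZR (Int_part (eps / (2 * K * log2 (INR T)) * INR (nbar eps c' p' Wbar Sbar)))
    else 0) G).

(* Axis-parallel box [xL,xR) x [yB,yT), yT = None meaning infinity. *)
Record box := Box { xL : nat; xR : nat; yB : nat; yT : option nat }.

Definition in_box (b : box) (t s : nat) : Prop :=
  (xL b <= t < xR b)%nat /\ (yB b <= s)%nat /\
  match yT b with None => True | Some y => (s < y)%nat end.

Definition in_Abar (abar bbar t s : nat) : Prop := (abar <= t < bbar)%nat.

(* f is a step function on Abar = [abar,bbar) x [0,oo) whose steps are the
   boxes: the boxes partition Abar (checked on lattice points, which is
   equivalent for boxes with integer corners) and f is constant on each. *)
Definition step_fun (abar bbar : nat) (f : nat -> nat -> nat) (bs : list box) : Prop :=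
  (forall b t s, In b bs -> in_box b t s -> in_Abar abar bbar t s) /\
  (forall t s, in_Abar abar bbar t s -> exists b, In b bs /\ in_box b t s) /\
  (forall i j t s, (i < length bs)%nat -> (j < length bs)%nat ->
     in_box (nth i bs (Box 0 0 0 None)) t s -> in_box (nth j bs (Box 0 0 0 None)) t s -> i = j) /\
  (forall b t s t' s', In b bs -> in_box b t s -> in_box b t' s' -> f t s = f t' s').

From Stdlib Require Import Reals ZArith Arith List Lia Lra.
Import ListNotations.
Open Scope R_scope.

(* A row W contributes p(W) to the ray sum at (t, s) exactly when its level is at most s and
   t lies before the right end e(W) of its part in Sbar: Sbar holds a prefix of a gap-free row
   reaching left of abar.  For a class (c', p') with n rows meeting Sbar, let
   m = floor(eps n / (2 K log T)) / 4 and cut the x-axis (resp. the y-axis) so that every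
   cut-free interval holds at most m of the ends e(W) (resp. levels) of the class; this takes at
   most n / (m + 1) <= 8 K log T / eps cuts per class.  On the grid of all cuts, f takes the value
   of the ray sum at the bottom-right lattice point of each cell.  Going from that corner to
   (t, s) only switches on rows whose end or level lies in the cell, at most 2m per class, each of
   value below 2 (1+eps)^p', hence an error of at most 4m (1+eps)^p'. *)

Local Open Scope nat_scope.
Local Open Scope bool_scope.

Lemma filter_length_mono {A} (f g : A -> bool) (l : list A) :
  (forall x, In x l -> f x = true -> g x = true) ->
  length (filter f l) <= length (filter g l).
Proof.
  induction l as [|x l IH]; intros H; simpl; [lia|].
  specialize (IH (fun y Hy => H y (or_intror Hy))).
  destruct (f x) eqn:Ef; [rewrite (H x (or_introl eq_refl) Ef); simpl; lia|].
  destruct (g x); simpl; lia.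
Qed.

Lemma filter_length_orb {A} (f g : A -> bool) (l : list A) :
  length (filter (fun x => f x || g x) l) <= length (filter f l) + length (filter g l).
Proof. induction l as [|x l IH]; simpl; [lia|]. destruct (f x), (g x); simpl; lia. Qed.

Lemma list_max_In (l : list nat) : l <> [] -> In (list_max l) l.
Proof.
  induction l as [|x l IH]; intros Hl; [congruence|].
  destruct l as [|y l]; [left; simpl; lia|].
  change (list_max (x :: y :: l)) with (Nat.max x (list_max (y :: l))).
  destruct (Nat.max_spec x (list_max (y :: l))) as [[_ ->]|[_ ->]];
    [right; apply IH; discriminate|left; reflexivity].
Qed.

Lemma le_list_max (l : list nat) x : In x l -> x <= list_max l.
Proof.
  intros Hx. assert (Hall := proj1 (list_max_le l (list_max l)) (le_n _)).
  rewrite Forall_forall in Hall. auto.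
Qed.

Lemma filter_filter {A} (f g : A -> bool) (l : list A) :
  filter f (filter g l) = filter (fun x => g x && f x) l.
Proof.
  induction l as [|x l IH]; simpl; [reflexivity|]. destruct (g x); simpl; rewrite ?IH; reflexivity.
Qed.

Lemma list_sumn_indicator {A} (f : A -> bool) (c : nat) (l : list A) :
  list_sumn (map (fun x => if f x then c else O) l) = c * length (filter f l).
Proof. induction l as [|x l IH]; simpl; [lia|]. destruct (f x); simpl; rewrite IH; lia. Qed.

Lemma list_sumn_le {A} (f g : A -> nat) (l : list A) :
  (forall x, In x l -> f x <= g x) -> list_sumn (map f l) <= list_sumn (map g l).
Proof.
  induction l as [|x l IH]; intros H; simpl; [lia|].
  specialize (H x (or_introl eq_refl)) as Hx. specialize (IH (fun y Hy => H y (or_intror Hy))). lia.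
Qed.

Lemma list_sumn_split {A} (f g : A -> nat) (l : list A) :
  (forall x, In x l -> f x <= g x) ->
  list_sumn (map g l) = list_sumn (map f l) + list_sumn (map (fun x => g x - f x) l).
Proof.
  induction l as [|x l IH]; intros H; simpl; [reflexivity|].
  specialize (H x (or_introl eq_refl)) as Hx. rewrite (IH (fun y Hy => H y (or_intror Hy))). lia.
Qed.

Lemma list_sumn_zero {A} (f : A -> nat) (l : list A) :
  (forall x, In x l -> f x = O) -> list_sumn (map f l) = O.
Proof.
  induction l as [|x l IH]; intros H; simpl; [reflexivity|].
  rewrite H, IH; [reflexivity| |left; reflexivity]. intros y Hy. apply H. right. exact Hy.
Qed.

Lemma list_sumn_by_class {A B} (P : B -> A -> bool) (d : A -> nat) (G : list B) (l : list A) :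
  (forall x, In x l -> exists g, In g G /\ P g x = true) ->
  list_sumn (map d l) <= list_sumn (map (fun g => list_sumn (map d (filter (P g) l))) G).
Proof.
  induction l as [|x l IH]; intros H; simpl; [lia|].
  assert (Hx : d x <= list_sumn (map (fun g => if P g x then d x else O) G)).
  { destruct (H x (or_introl eq_refl)) as [g [Hg HPg]]. clear -Hg HPg.
    induction G as [|g' G IHG]; [contradiction|]. simpl.
    destruct Hg as [<-|Hg]; [rewrite HPg; lia|]. specialize (IHG Hg). lia. }
  specialize (IH (fun y Hy => H y (or_intror Hy))).
  enough (list_sumn (map (fun g => list_sumn (map d (if P g x then x :: filter (P g) l
                                                                else filter (P g) l))) G)
          = list_sumn (map (fun g => if P g x then d x else O) G)
            + list_sumn (map (fun g => list_sumn (map d (filter (P g) l))) G)) by lia.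
  clear. induction G as [|g G IHG]; simpl; [reflexivity|].
  rewrite IHG. destruct (P g x); simpl; lia.
Qed.

Definition in_ioc (lo hi x : nat) : bool := (lo <? x) && (x <=? hi).

Definition cut_free (cuts : list nat) (lo hi : nat) : Prop :=
  forall c, In c cuts -> lo < c -> hi < c.

Definition sparse_between_cuts (m : nat) (cuts L : list nat) : Prop :=
  forall lo hi, cut_free cuts lo hi -> length (filter (in_ioc lo hi) L) <= m.

Lemma sparse_between_cuts_incl m cuts cuts' L :
  incl cuts cuts' -> sparse_between_cuts m cuts L -> sparse_between_cuts m cuts' L.
Proof. intros Hincl Hsp lo hi Hfree. apply Hsp. intros c Hc. apply Hfree, Hincl, Hc. Qed.

Lemma threshold_exists (L : list nat) m : m < length L ->
  exists c, m < length (filter (fun x => x <=? c) L) /\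
            length (filter (fun x => x <? c) L) <= m.
Proof.
  intros Hm.
  assert (Hbelow : forall N, m < length (filter (fun x => x <=? N) L) ->
    exists c, m < length (filter (fun x => x <=? c) L) /\
              length (filter (fun x => x <? c) L) <= m).
  { induction N as [|N IH]; intros HN.
    - exists 0. split; [exact HN|].
      rewrite (filter_ext _ (fun _ => false)), filter_false; simpl; [lia|].
      intros x. apply Nat.ltb_ge. lia.
    - destruct (Nat.lt_ge_cases m (length (filter (fun x => x <=? N) L))) as [HmN|HmN];
        [exact (IH HmN)|].
      exists (S N). split; [exact HN|]. rewrite (filter_ext _ (fun x => x <=? N)); [exact HmN|].
      intros x. destruct (Nat.ltb_spec x (S N)), (Nat.leb_spec x N); auto; lia. }
  apply (Hbelow (list_max L)).
  rewrite forallb_filter_id; [exact Hm|].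
  apply forallb_forall. intros x Hx. apply Nat.leb_le, le_list_max, Hx.
Qed.

(* Cutting at the least value below which more than m points lie, and recursing on the
   points above it, spends a cut for every m+1 points. *)
Lemma sparse_cuts_exist m (L : list nat) :
  exists cuts, S m * length cuts <= length L /\ sparse_between_cuts m cuts L.
Proof.
  remember (length L) as n eqn:Hn. revert L Hn.
  induction n as [n IH] using lt_wf_ind. intros L ->.
  destruct (Nat.le_gt_cases (length L) m) as [Hsmall|Hbig].
  { exists []. split; [simpl; lia|].
    intros lo hi _. pose proof (filter_length_le (in_ioc lo hi) L). lia. }
  destruct (threshold_exists L m Hbig) as [c [Hle Hlt]].
  set (L' := filter (fun x => c <? x) L).
  assert (Hsplit : length (filter (fun x => x <=? c) L) + length L' = length L).
  { rewrite <- (filter_length (fun x => x <=? c) L). unfold L'.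
    do 2 f_equal. apply filter_ext. intros x. apply Nat.ltb_antisym. }
  destruct (IH (length L') ltac:(lia) L' eq_refl) as [cuts [Hlen Hsparse]].
  exists (c :: cuts). split; [simpl; lia|].
  intros lo hi Hfree.
  destruct (Nat.lt_ge_cases lo c) as [Hlo|Hlo].
  - assert (Hhi : hi < c) by (apply Hfree; [left|]; auto).
    etransitivity; [|exact Hlt]. apply filter_length_mono.
    intros x _ Hx. unfold in_ioc in Hx. apply andb_prop in Hx as [_ Hx].
    apply Nat.leb_le in Hx. apply Nat.ltb_lt. lia.
  - replace (filter (in_ioc lo hi) L) with (filter (in_ioc lo hi) L').
    + apply Hsparse. intros c' Hc'. apply Hfree. right. exact Hc'.
    + unfold L'. rewrite filter_filter. apply filter_ext. intros x. unfold in_ioc.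
      destruct (Nat.ltb_spec c x), (Nat.ltb_spec lo x); simpl; auto; lia.
Qed.

Definition cut_below (base : nat) (cuts : list nat) (t : nat) : nat :=
  list_max (base :: filter (fun c => c <=? t) cuts).

Definition cut_above (cuts : list nat) (t : nat) : option nat :=
  fold_right (fun c o => if t <? c then Some (match o with Some h => Nat.min c h | None => c end)
                         else o) None cuts.

Lemma cut_above_spec cuts t :
  match cut_above cuts t with
  | Some h => In h cuts /\ t < h /\ (forall c, In c cuts -> t < c -> h <= c)
  | None => forall c, In c cuts -> c <= t
  end.
Proof.
  induction cuts as [|c cuts IH]; simpl; [contradiction|].
  destruct (Nat.ltb_spec t c) as [Htc|Htc];
    destruct (cut_above cuts t) as [h|] eqn:E; simpl in *.
  - destruct IH as [Hh [Hth Hmin]].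
    destruct (Nat.min_spec c h) as [[Hch ->]|[Hch ->]];
      (split; [first [left; reflexivity | right; exact Hh]|split; [lia|]]);
      intros c' [Ec|Hc'] Htc'; [subst; lia| |subst; lia|];
      specialize (Hmin c' Hc' Htc'); lia.
  - split; [left; reflexivity|split; [exact Htc|]].
    intros c' [<-|Hc'] Htc'; [lia|]. specialize (IH c' Hc'). lia.
  - destruct IH as [Hh [Hth Hmin]]. split; [right; exact Hh|split; [exact Hth|]].
    intros c' [<-|Hc'] Htc'; [lia|]. auto.
  - intros c' [<-|Hc']; auto.
Qed.

Lemma cut_free_iff_cut_above cuts a s :
  cut_free cuts a s <-> match cut_above cuts a with Some h => s < h | None => True end.
Proof.
  pose proof (cut_above_spec cuts a) as Hspec.
  destruct (cut_above cuts a) as [h|]; split.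
  - intros Hfree. apply Hfree; apply Hspec.
  - intros Hs c Hc Hac. destruct Hspec as [_ [_ Hmin]]. specialize (Hmin c Hc Hac). lia.
  - trivial.
  - intros _ c Hc Hac. specialize (Hspec c Hc). lia.
Qed.

Lemma cut_below_spec base cuts t : base <= t ->
  In (cut_below base cuts t) (base :: cuts) /\ base <= cut_below base cuts t <= t /\
  cut_free cuts (cut_below base cuts t) t.
Proof.
  intros Hbt. unfold cut_below.
  set (l := base :: filter (fun c => c <=? t) cuts).
  assert (Hl : forall c, In c l -> c <= t).
  { intros c [<-|Hc]; [exact Hbt|]. apply filter_In in Hc as [_ Hc]. apply Nat.leb_le, Hc. }
  assert (Hin : In (list_max l) l) by (apply list_max_In; discriminate).
  split; [|split; [split|]].
  - destruct Hin as [<-|Hin]; [left; reflexivity|].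
    apply filter_In in Hin as [Hin _]. right; exact Hin.
  - apply le_list_max. left; reflexivity.
  - apply Hl, Hin.
  - intros c Hc Hlt. destruct (Nat.le_gt_cases c t) as [Hct|Hct]; [|exact Hct].
    assert (c <= list_max l); [|lia].
    apply le_list_max. right. apply filter_In. split; [exact Hc|apply Nat.leb_le, Hct].
Qed.

Lemma cut_below_unique base cuts a t :
  In a (base :: cuts) -> base <= a <= t -> cut_free cuts a t -> cut_below base cuts t = a.
Proof.
  intros Ha Hbat Hfree. apply Nat.le_antisymm.
  - apply list_max_le, Forall_forall. intros c [<-|Hc]; [lia|].
    apply filter_In in Hc as [Hc Hct]. apply Nat.leb_le in Hct.
    destruct (Nat.le_gt_cases c a) as [Hca|Hca]; [exact Hca|].
    specialize (Hfree c Hc Hca). lia.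
  - apply le_list_max. destruct Ha as [<-|Ha]; [left; reflexivity|].
    right. apply filter_In. split; [exact Ha|apply Nat.leb_le; lia].
Qed.

Definition box_eq_dec (b b' : box) : {b = b'} + {b <> b'}.
Proof. decide equality; try decide equality; apply Nat.eq_dec. Defined.

Section Grid.
Variables (abar bbar : nat) (cutsX cutsY : list nat).

Definition x_end (a : nat) : nat :=
  match cut_above cutsX a with Some h => Nat.min h bbar | None => bbar end.

Definition cell_box (a c : nat) : box := Box a (x_end a) c (cut_above cutsY c).

Definition grid_boxes : list box :=
  nodup box_eq_dec (map (fun ac => cell_box (fst ac) (snd ac))
    (list_prod (filter (fun a => (abar <=? a) && (a <? bbar)) (abar :: cutsX)) (0 :: cutsY))).

(* The value on the cell containing (t, s) is read at the cell's bottom-right lattice point. *)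
Definition grid_fun (F : nat -> nat -> nat) (t s : nat) : nat :=
  F (cut_below 0 cutsY s) (pred (x_end (cut_below abar cutsX t))).

Lemma lt_x_end a t : t < x_end a <-> t < bbar /\ cut_free cutsX a t.
Proof.
  rewrite cut_free_iff_cut_above. unfold x_end.
  destruct (cut_above cutsX a); [|tauto]. split; [|intros [? ?]]; lia.
Qed.

Lemma in_cell_box a c t s :
  in_box (cell_box a c) t s <->
  (a <= t /\ t < bbar /\ cut_free cutsX a t) /\ (c <= s /\ cut_free cutsY c s).
Proof.
  unfold in_box, cell_box. simpl. rewrite lt_x_end, (cut_free_iff_cut_above cutsY).
  destruct (cut_above cutsY c); tauto.
Qed.

Lemma in_grid_boxes b :
  In b grid_boxes <->
  exists a c, (In a (abar :: cutsX) /\ abar <= a < bbar) /\ In c (0 :: cutsY) /\ b = cell_box a c.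
Proof.
  unfold grid_boxes. rewrite nodup_In, in_map_iff. split.
  - intros [[a c] [<- Hac]]. apply in_prod_iff in Hac as [Ha Hc].
    apply filter_In in Ha as [Ha Hrange]. apply andb_prop in Hrange as [H1 H2].
    apply Nat.leb_le in H1. apply Nat.ltb_lt in H2. exists a, c. auto.
  - intros [a [c [[Ha Hrange] [Hc ->]]]]. exists (a, c). split; [reflexivity|].
    apply in_prod; [|exact Hc]. apply filter_In. split; [exact Ha|].
    apply andb_true_intro. split; [apply Nat.leb_le|apply Nat.ltb_lt]; lia.
Qed.

Lemma grid_box_cell b t s : In b grid_boxes -> in_box b t s ->
  b = cell_box (cut_below abar cutsX t) (cut_below 0 cutsY s).
Proof.
  intros Hb Hts. apply in_grid_boxes in Hb as [a [c [[Ha Hrange] [Hc ->]]]].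
  apply in_cell_box in Hts as [[Hat [_ HfX]] [Hcs HfY]].
  rewrite (cut_below_unique abar cutsX a t), (cut_below_unique 0 cutsY c s); auto; lia.
Qed.

Lemma grid_step_fun F : step_fun abar bbar (grid_fun F) grid_boxes.
Proof.
  split; [|split; [|split]].
  - intros b t s Hb Hts. apply in_grid_boxes in Hb as [a [c [[_ Hrange] [_ ->]]]].
    apply in_cell_box in Hts as [[Hat [Htb _]] _]. unfold in_Abar. lia.
  - intros t s Hts. unfold in_Abar in Hts.
    destruct (cut_below_spec abar cutsX t) as [HaX [HaXt HfX]]; [lia|].
    destruct (cut_below_spec 0 cutsY s) as [HcY [HcYs HfY]]; [lia|].
    exists (cell_box (cut_below abar cutsX t) (cut_below 0 cutsY s)). split.
    + apply in_grid_boxes. do 2 eexists.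
      split; [split; [exact HaX|lia]|]. split; [exact HcY|reflexivity].
    + apply in_cell_box. repeat split; auto; lia.
  - intros i j t s Hi Hj Hbi Hbj.
    apply (proj1 (NoDup_nth grid_boxes (Box 0 0 0 None)) (NoDup_nodup _ _) i j Hi Hj).
    rewrite (grid_box_cell _ t s (nth_In _ _ Hi) Hbi), (grid_box_cell _ t s (nth_In _ _ Hj) Hbj).
    reflexivity.
  - intros b t s t' s' Hb Hts Hts'.
    pose proof (grid_box_cell b t s Hb Hts) as E. rewrite (grid_box_cell b t' s' Hb Hts') in E.
    unfold grid_fun. injection E as -> _ -> _. reflexivity.
Qed.

Lemma grid_boxes_length : length grid_boxes <= S (length cutsX) * S (length cutsY).
Proof.
  unfold grid_boxes. set (cells := map _ _).
  transitivity (length cells).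
  - apply NoDup_incl_length; [apply NoDup_nodup|]. intros b. apply nodup_In.
  - unfold cells. rewrite length_map, length_prod. apply Nat.mul_le_mono; [|reflexivity].
    apply (filter_length_le _ (abar :: cutsX)).
Qed.

Lemma grid_fun_point F t s : in_Abar abar bbar t s ->
  exists t' s', grid_fun F t s = F s' t' /\
    t <= t' < bbar /\ cut_free cutsX t t' /\ s' <= s /\ cut_free cutsY s' s.
Proof.
  intros Hts. unfold in_Abar in Hts.
  destruct (cut_below_spec abar cutsX t) as [_ [Hat HfX]]; [lia|].
  destruct (cut_below_spec 0 cutsY s) as [_ [Hcs HfY]]; [lia|].
  set (a := cut_below abar cutsX t) in *.
  assert (Ht : t < x_end a) by (apply lt_x_end; split; [lia|exact HfX]).
  assert (Hend : x_end a <= bbar) by (unfold x_end; destruct (cut_above cutsX a); lia).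
  exists (pred (x_end a)), (cut_below 0 cutsY s).
  split; [reflexivity|]. split; [lia|]. split; [|split; [lia|exact HfY]].
  intros c Hc Htc. destruct (Nat.le_gt_cases c (pred (x_end a))) as [Hce|Hce]; [|exact Hce].
  assert (Hcx : c < x_end a) by lia. apply lt_x_end in Hcx as [_ Hfree].
  specialize (Hfree c Hc ltac:(lia)). lia.
Qed.

End Grid.

Definition covers (Rc : rect) (t : nat) : bool := (rl Rc <=? t) && (t <? rr Rc).

Definition prefix_closed (Sb : rect -> bool) (W : list rect) : Prop :=
  forall Rc Rc', In Rc W -> In Rc' W -> Sb Rc = true -> rr Rc' <= rl Rc -> Sb Rc' = true.

Definition row_sum (Sb : rect -> bool) (W : list rect) (s t : nat) : nat :=
  list_sumn (map (fun Rc => if Sb Rc && hits Rc s t then rp Rc else O) W).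

(* 0 when [Sb] selects nothing in [W]. *)
Definition s_end (Sb : rect -> bool) (W : list rect) : nat := list_max (map rr (filter Sb W)).

Definition row_value (W : list rect) : nat := match W with Rc :: _ => rp Rc | [] => O end.

Lemma consec_cons R1 W : consec (R1 :: W) -> consec W.
Proof. destruct W; simpl; tauto. Qed.

Lemma consec_after R1 W : consec (R1 :: W) -> (forall Rc, In Rc W -> rl Rc < rr Rc) ->
  forall Rc, In Rc W -> rr R1 <= rl Rc.
Proof.
  revert R1. induction W as [|R2 W IH]; intros R1 Hc Hpos Rc HRc; [contradiction|].
  destruct Hc as [E Hc]. destruct HRc as [<-|HRc]; [lia|].
  specialize (IH R2 Hc (fun R HR => Hpos R (or_intror HR)) Rc HRc).
  specialize (Hpos R2 (or_introl eq_refl)). lia.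
Qed.

Lemma prefix_closed_cons Sb R1 W : prefix_closed Sb (R1 :: W) -> prefix_closed Sb W.
Proof. intros H Rc Rc' HRc HRc'. apply H; right; assumption. Qed.

Lemma s_end_cons Sb R1 W :
  s_end Sb (R1 :: W) = if Sb R1 then Nat.max (rr R1) (s_end Sb W) else s_end Sb W.
Proof. unfold s_end. simpl. destruct (Sb R1); reflexivity. Qed.

Lemma s_end_unselected Sb W : existsb Sb W = false -> s_end Sb W = O.
Proof.
  intros H. unfold s_end. rewrite (filter_ext_in _ (fun _ => false)), filter_false; [reflexivity|].
  intros Rc HRc. destruct (Sb Rc) eqn:E; [|reflexivity].
  assert (existsb Sb W = true) by (apply existsb_exists; eauto). congruence.
Qed.

(* Since [Sb] selects a prefix of a gap-free row, the selected rectangles tile [left, s_end). *)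
Lemma count_selected_covering Sb W t :
  consec W -> (forall Rc, In Rc W -> rl Rc < rr Rc) -> prefix_closed Sb W ->
  match W with Rc :: _ => rl Rc <= t | [] => True end ->
  length (filter (fun Rc => Sb Rc && covers Rc t) W) = if t <? s_end Sb W then 1 else O.
Proof.
  induction W as [|R1 W IH]; intros Hc Hpos Hpre Ht; [reflexivity|].
  assert (Hafter := consec_after R1 W Hc (fun Rc HRc => Hpos Rc (or_intror HRc))).
  assert (Hpos1 := Hpos R1 (or_introl eq_refl)).
  rewrite s_end_cons. simpl filter. destruct (Sb R1) eqn:ES1; simpl.
  - assert (Htail : t < rr R1 -> length (filter (fun Rc => Sb Rc && covers Rc t) W) = O).
    { intros Htr. rewrite (filter_ext_in _ (fun _ => false)), filter_false; [reflexivity|].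
      intros Rc HRc. specialize (Hafter Rc HRc). unfold covers.
      destruct (Nat.leb_spec (rl Rc) t); [lia|]. rewrite Bool.andb_false_r. reflexivity. }
    unfold covers at 1. destruct (Nat.ltb_spec t (rr R1)) as [Htr|Htr].
    + apply Nat.leb_le in Ht. rewrite Ht. simpl. rewrite Htail by exact Htr.
      destruct (Nat.ltb_spec t (Nat.max (rr R1) (s_end Sb W))); simpl; lia.
    + rewrite Bool.andb_false_r. rewrite IH.
      * destruct (Nat.ltb_spec t (s_end Sb W)), (Nat.ltb_spec t (Nat.max (rr R1) (s_end Sb W)));
          lia.
      * exact (consec_cons R1 W Hc).
      * intros Rc HRc. apply Hpos. right. exact HRc.
      * exact (prefix_closed_cons Sb R1 W Hpre).
      * destruct W as [|R2 W]; [trivial|]. destruct Hc as [E _]. lia.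
  - assert (Hnone : forall Rc, In Rc W -> Sb Rc = false).
    { intros Rc HRc. destruct (Sb Rc) eqn:ES; [|reflexivity].
      rewrite (Hpre Rc R1 (or_intror HRc) (or_introl eq_refl) ES (Hafter Rc HRc)) in ES1.
      discriminate. }
    rewrite (filter_ext_in _ (fun _ => false)), filter_false, s_end_unselected; [reflexivity| |].
    + apply Bool.not_true_iff_false. intros Hex. apply existsb_exists in Hex as [Rc [HRc HS]].
      rewrite Hnone in HS by exact HRc. discriminate.
    + intros Rc HRc. rewrite Hnone by exact HRc. reflexivity.
Qed.

Lemma row_sum_eq Sb W s t :
  valid_row W -> prefix_closed Sb W -> (exists Rc, In Rc W /\ rl Rc <= t) ->
  row_sum Sb W s t = if (row_j W <=? s) && (t <? s_end Sb W) then row_value W else O.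
Proof.
  intros [Hne [Hc [Hj [Hp Hpos]]]] Hpre [Rc [HRc Ht]].
  destruct W as [|R1 W]; [contradiction|].
  assert (Hwidth : forall R, In R (R1 :: W) -> rl R < rr R) by (intros R HR; apply Hpos, HR).
  unfold row_sum.
  rewrite (map_ext_in _ (fun R => if (row_j (R1 :: W) <=? s) && (Sb R && covers R t)
                                   then row_value (R1 :: W) else O)).
  2:{ intros R HR. unfold hits, covers. rewrite (Hj R HR), (Hp R R1 HR (or_introl eq_refl)).
      destruct (Sb R), (rl R <=? t), (t <? rr R), (row_j (R1 :: W) <=? s); reflexivity. }
  rewrite list_sumn_indicator.
  destruct (row_j (R1 :: W) <=? s); simpl andb.
  2:{ rewrite filter_false. simpl. lia. }
  rewrite (count_selected_covering Sb (R1 :: W) t Hc Hwidth Hpre).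
  - destruct (t <? s_end Sb (R1 :: W)); lia.
  - destruct HRc as [<-|HRc]; [exact Ht|].
    pose proof (consec_after R1 W Hc (fun R HR => Hwidth R (or_intror HR)) Rc HRc).
    pose proof (Hwidth R1 (or_introl eq_refl)). lia.
Qed.

Lemma row_sum_gap Sb W s s' t t' :
  valid_row W -> prefix_closed Sb W -> (exists Rc, In Rc W /\ rl Rc <= t) -> s' <= s -> t <= t' ->
  row_sum Sb W s' t' <= row_sum Sb W s t <=
  row_sum Sb W s' t' +
  (if existsb Sb W && (in_ioc s' s (row_j W) || in_ioc t t' (s_end Sb W)) then row_value W else O).
Proof.
  intros Hrow Hpre [Rc [HRc Ht]] Hs Htt.
  rewrite !(row_sum_eq Sb W) by (eauto || (exists Rc; split; [exact HRc|lia])).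
  destruct (existsb Sb W) eqn:ES.
  - unfold in_ioc. simpl andb.
    destruct (Nat.leb_spec (row_j W) s'), (Nat.leb_spec (row_j W) s),
      (Nat.ltb_spec t (s_end Sb W)), (Nat.ltb_spec t' (s_end Sb W)),
      (Nat.ltb_spec s' (row_j W)), (Nat.leb_spec (s_end Sb W) t'); simpl; lia.
  - rewrite s_end_unselected by exact ES. rewrite !Bool.andb_false_r. simpl. lia.
Qed.

Lemma row_sum_le_total Sb W s t : row_sum Sb W s t <= list_sumn (map rp W).
Proof. unfold row_sum. induction W as [|Rc W IH]; simpl; [lia|]. destruct (_ && _); lia. Qed.

Lemma row_sum_no_hit Sb W s t :
  existsb (fun Rc => hits Rc s t) W = false -> row_sum Sb W s t = O.
Proof.
  unfold row_sum. induction W as [|Rc W IH]; simpl; [reflexivity|].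
  intros H. apply Bool.orb_false_iff in H as [H1 H2]. rewrite H1, Bool.andb_false_r. simpl. auto.
Qed.

Local Close Scope nat_scope.

Lemma INR_list_sumn_le {A} (h : A -> nat) (bound : A -> R) (l : list A) :
  (forall x, In x l -> INR (h x) <= bound x) ->
  INR (list_sumn (map h l)) <= fold_right Rplus 0 (map bound l).
Proof.
  induction l as [|x l IH]; intros H; simpl; [lra|]. rewrite plus_INR.
  specialize (H x (or_introl eq_refl)) as Hx. specialize (IH (fun y Hy => H y (or_intror Hy))). lra.
Qed.

Lemma INR_list_sumn_count {A} (d : A -> nat) (P : A -> bool) (v : R) (l : list A) :
  (forall x, In x l -> INR (d x) <= if P x then v else 0) ->
  INR (list_sumn (map d l)) <= v * INR (length (filter P l)).
Proof.
  induction l as [|x l IH]; intros H; simpl; [lra|]. rewrite plus_INR.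
  specialize (H x (or_introl eq_refl)) as Hx. specialize (IH (fun y Hy => H y (or_intror Hy))).
  destruct (P x); simpl length; rewrite ?S_INR; lra.
Qed.

Lemma powerRZ_class_exists (b : R) (v : nat) : 1 < b -> (1 <= v)%nat ->
  exists p : Z, powerRZ b p <= INR v < powerRZ b (p + 1).
Proof.
  intros Hb Hv.
  assert (Hlb : 0 < ln b) by (rewrite <- ln_1; apply ln_increasing; lra).
  assert (HvR : 1 <= INR v) by (apply (le_INR 1); exact Hv).
  set (x := ln (INR v) / ln b).
  destruct (base_Int_part x) as [Hlo Hhi].
  exists (Int_part x).
  rewrite !powerRZ_Rpower by lra. unfold Rpower. rewrite plus_IZR.
  assert (Hx : x * ln b = ln (INR v)) by (unfold x; field; lra).
  rewrite <- (exp_ln (INR v)) by lra. rewrite <- Hx. split.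
  - destruct (Req_dec (IZR (Int_part x)) x) as [E|E]; [rewrite E; lra|].
    left. apply exp_increasing, Rmult_lt_compat_r; lra.
  - apply exp_increasing, Rmult_lt_compat_r; lra.
Qed.

Lemma row_has_class eps W : 0 < eps -> valid_row W -> exists c' p', in_classb eps c' p' W = true.
Proof.
  intros He [Hne [_ [_ [_ Hpos]]]].
  destruct W as [|R1 W]; [contradiction|].
  destruct (Hpos R1 (or_introl eq_refl)) as [_ [_ Hp]].
  destruct (powerRZ_class_exists (1 + eps) (rp R1) ltac:(lra) Hp) as [p' [H1 H2]].
  exists (rc R1), p'. simpl.
  destruct (Req_EM_T (rc R1) (rc R1)); [|contradiction].
  destruct (Rle_dec (powerRZ (1 + eps) p') (INR (rp R1))); [|contradiction].
  destruct (Rlt_dec (INR (rp R1)) (powerRZ (1 + eps) (p' + 1))); [reflexivity|contradiction].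
Qed.

Lemma row_value_class_bound eps c' p' W : 0 < eps < 1 -> in_classb eps c' p' W = true ->
  INR (row_value W) <= 2 * powerRZ (1 + eps) p'.
Proof.
  intros He H. destruct W as [|R1 W]; [discriminate|]. simpl in *.
  destruct (Req_EM_T (rc R1) c'); [|discriminate].
  destruct (Rle_dec (powerRZ (1 + eps) p') (INR (rp R1))); [|discriminate].
  destruct (Rlt_dec (INR (rp R1)) (powerRZ (1 + eps) (p' + 1))) as [Hlt|]; [|discriminate].
  rewrite powerRZ_add in Hlt by lra. simpl in Hlt.
  pose proof (powerRZ_lt (1 + eps) p' ltac:(lra)). nra.
Qed.

Definition class_rows (eps : R) (Wbar : list (list rect)) (Sbar : rect -> bool) (g : R * Z) :=
  filter (fun W => in_classb eps (fst g) (snd g) W && existsb Sbar W) Wbar.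

Definition class_budget (dl : R) (n : nat) : nat := (Z.to_nat (Int_part (dl * INR n)) / 4)%nat.

Lemma IZR_Int_part_nonneg x : 0 <= x -> IZR (Int_part x) = INR (Z.to_nat (Int_part x)).
Proof.
  intros Hx. destruct (base_Int_part x) as [_ Hhi].
  assert (Hz : (-1 < Int_part x)%Z) by (apply lt_IZR; lra).
  rewrite INR_IZR_INZ, Z2Nat.id by lia. reflexivity.
Qed.

Lemma class_budget_le dl n : 0 <= dl -> 4 * INR (class_budget dl n) <= IZR (Int_part (dl * INR n)).
Proof.
  intros Hdl. rewrite IZR_Int_part_nonneg by (apply Rmult_le_pos; [exact Hdl|apply pos_INR]).
  unfold class_budget. set (k := Z.to_nat _).
  replace 4 with (INR 4) by (simpl; lra). rewrite <- mult_INR. apply le_INR.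
  apply Nat.Div0.mul_div_le.
Qed.

(* floor(dl n) < 4 (budget + 1), so cutting every budget+1 points costs at most 4/dl cuts. *)
Lemma class_budget_cuts dl n len : 0 < dl -> (S (class_budget dl n) * len <= n)%nat ->
  INR len <= 4 / dl.
Proof.
  intros Hdl Hlen.
  assert (Hn : 0 <= dl * INR n) by (apply Rmult_le_pos; [lra|apply pos_INR]).
  destruct (base_Int_part (dl * INR n)) as [_ Hhi].
  rewrite IZR_Int_part_nonneg in Hhi by exact Hn.
  unfold class_budget in Hlen. set (k := Z.to_nat _) in *. set (m := (k / 4)%nat) in *.
  assert (Hk : (S k <= 4 * S m)%nat).
  { pose proof (Nat.div_mod k 4 ltac:(lia)). pose proof (Nat.mod_upper_bound k 4 ltac:(lia)). lia. }
  apply le_INR in Hk, Hlen. rewrite !mult_INR in Hk, Hlen. rewrite !(S_INR m), (S_INR k) in *.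
  replace (INR 4) with 4 in Hk by (simpl; lra).
  assert (Hm : 0 < INR m + 1) by (pose proof (pos_INR m); lra).
  apply Rmult_le_reg_l with dl; [exact Hdl|]. replace (dl * (4 / dl)) with 4 by (field; lra).
  apply Rmult_le_reg_l with (INR m + 1); [exact Hm|].
  apply (Rmult_le_compat_l dl) in Hlen; [|lra].
  replace ((INR m + 1) * (dl * INR len)) with (dl * ((INR m + 1) * INR len)) by ring. lra.
Qed.



Lemma common_cuts {A} (G : list A) (P : A -> list nat -> Prop) (B : R) :
  (forall g cuts cuts', incl cuts cuts' -> P g cuts -> P g cuts') ->
  (forall g, exists cuts, INR (length cuts) <= B /\ P g cuts) ->
  exists cuts, INR (length cuts) <= B * INR (length G) /\ forall g, In g G -> P g cuts.
Proof.
  intros Hmono Hex. induction G as [|g G IH].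
  - exists []. simpl. split; [lra|contradiction].
  - destruct IH as [cuts [Hlen HP]]. destruct (Hex g) as [cg [Hcg HPg]].
    exists (cg ++ cuts). split.
    + rewrite length_app, plus_INR. simpl length. rewrite S_INR. lra.
    + intros g' [<-|Hg'].
      * apply (Hmono g cg); [apply incl_appl, incl_refl|exact HPg].
      * apply (Hmono g' cuts); [apply incl_appr, incl_refl|exact (HP g' Hg')].
Qed.

Lemma class_cuts_exist (key : list rect -> nat) eps dl Wbar Sbar (G : list (R * Z)) : 0 < dl ->
  exists cuts, INR (length cuts) <= 4 / dl * INR (length G) /\
    forall g, In g G -> sparse_between_cuts (class_budget dl (length (class_rows eps Wbar Sbar g)))
                          cuts (map key (class_rows eps Wbar Sbar g)).
Proof.
  intros Hdl. apply common_cuts.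
  - intros g cuts cuts'. apply sparse_between_cuts_incl.
  - intros g. set (L := class_rows eps Wbar Sbar g).
    destruct (sparse_cuts_exist (class_budget dl (length L)) (map key L)) as [cuts [Hlen Hsp]].
    rewrite length_map in Hlen.
    exists cuts. split; [exact (class_budget_cuts dl _ _ Hdl Hlen)|exact Hsp].
Qed.


Section Approximation.
Variables (eps K : R) (T abar bbar : nat) (Wbar : list (list rect)) (G : list (R * Z)).
Variable Sbar : rect -> bool.
Hypothesis Heps : 0 < eps < 1.
Hypothesis Hdl : 0 <= eps / (2 * K * log2 (INR T)).
Hypothesis Hrows : forall W, In W Wbar -> valid_row W.
Hypothesis Hspan : forall W, In W Wbar -> spans abar bbar W.
Hypothesis HG : forall c' p' W, In W Wbar -> in_classb eps c' p' W = true -> In (c', p') G.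
Hypothesis Hpre : forall W, In W Wbar -> prefix_closed Sbar W.

Local Notation dl := (eps / (2 * K * log2 (INR T))).
Local Notation budget g := (class_budget dl (length (class_rows eps Wbar Sbar g))).

Variables (cutsX cutsY : list nat) (s s' t t' : nat).
Hypothesis HcutsX : forall g, In g G ->
  sparse_between_cuts (budget g) cutsX (map (s_end Sbar) (class_rows eps Wbar Sbar g)).
Hypothesis HcutsY : forall g, In g G ->
  sparse_between_cuts (budget g) cutsY (map row_j (class_rows eps Wbar Sbar g)).
Hypothesis Ht : (abar <= t <= t')%nat.
Hypothesis HfreeX : cut_free cutsX t t'.
Hypothesis Hs : (s' <= s)%nat.
Hypothesis HfreeY : cut_free cutsY s' s.

Local Notation changed W :=
  (existsb Sbar W && (in_ioc s' s (row_j W) || in_ioc t t' (s_end Sbar W))).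
Local Notation gap W := (row_sum Sbar W s t - row_sum Sbar W s' t')%nat.

Lemma row_gap W : In W Wbar ->
  (row_sum Sbar W s' t' <= row_sum Sbar W s t <=
   row_sum Sbar W s' t' + if changed W then row_value W else O)%nat.
Proof.
  intros HW. destruct (Hspan W HW) as [Rc [_ [HRc [_ [Hl _]]]]].
  apply row_sum_gap; auto. exists Rc. split; [exact HRc|lia]. lia.
Qed.

Lemma changed_count g : In g G ->
  (length (filter (fun W => changed W) (filter (in_classb eps (fst g) (snd g)) Wbar))
   <= 2 * budget g)%nat.
Proof.
  intros Hg. set (CR := class_rows eps Wbar Sbar g).
  replace (filter _ (filter _ Wbar))
    with (filter (fun W => in_ioc s' s (row_j W) || in_ioc t t' (s_end Sbar W)) CR).
  2:{ unfold CR, class_rows. rewrite !filter_filter. apply filter_ext. intros W.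
      symmetry. apply Bool.andb_assoc. }
  assert (HY : (length (filter (fun W => in_ioc s' s (row_j W)) CR) <= budget g)%nat).
  { rewrite <- (length_map row_j), <- filter_map_swap. exact (HcutsY g Hg s' s HfreeY). }
  assert (HX : (length (filter (fun W => in_ioc t t' (s_end Sbar W)) CR) <= budget g)%nat).
  { rewrite <- (length_map (s_end Sbar)), <- filter_map_swap. exact (HcutsX g Hg t t' HfreeX). }
  pose proof (filter_length_orb (fun W => in_ioc s' s (row_j W))
                (fun W => in_ioc t t' (s_end Sbar W)) CR) as Hor.
  cbv beta in Hor. unfold CR in *. lia.
Qed.

(* A changed row has value < (1+eps)^(p'+1) <= 2 (1+eps)^p', and at most 2 budget rows of the
   class change, while 4 budget <= floor(dl nbar). *)
Lemma class_gap_le c' p' : In (c', p') G ->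
  INR (list_sumn (map (fun W => gap W) (filter (in_classb eps c' p') Wbar))) <=
  if existsb (fun W => in_classb eps c' p' W && existsb (fun Rc => hits Rc s t) W) Wbar
  then powerRZ (1 + eps) p' * IZR (Int_part (dl * INR (nbar eps c' p' Wbar Sbar)))
  else 0.
Proof.
  intros Hg. destruct (existsb _ Wbar) eqn:Ehit.
  - set (u := powerRZ (1 + eps) p').
    assert (Hu : 0 < u) by (apply powerRZ_lt; lra).
    eapply Rle_trans.
    { apply (INR_list_sumn_count _ (fun W => changed W) (2 * u)).
      intros W HW. apply filter_In in HW as [HW Hcls].
      destruct (row_gap W HW) as [Hlo Hhi].
      destruct (changed W).
      - apply Rle_trans with (INR (row_value W)); [apply le_INR; lia|].
        exact (row_value_class_bound eps c' p' W Heps Hcls).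
      - replace (gap W) with O by lia. simpl. lra. }
    pose proof (le_INR _ _ (changed_count (c', p') Hg)) as Hcount.
    pose proof (class_budget_le dl (length (class_rows eps Wbar Sbar (c', p'))) Hdl) as Hbudget.
    cbn [fst snd] in Hcount. rewrite mult_INR in Hcount.
    replace (INR 2) with 2 in Hcount by (simpl; lra).
    change (nbar eps c' p' Wbar Sbar) with (length (class_rows eps Wbar Sbar (c', p'))).
    apply Rle_trans
      with (u * (4 * INR (class_budget dl (length (class_rows eps Wbar Sbar (c', p')))))).
    + rewrite (Rmult_comm 2 u), Rmult_assoc. apply Rmult_le_compat_l; lra.
    + apply Rmult_le_compat_l; lra.
  - rewrite list_sumn_zero; [simpl; lra|].
    intros W HW. apply filter_In in HW as [HW Hcls].
    assert (Hnohit : existsb (fun Rc => hits Rc s t) W = false).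
    { apply Bool.not_true_iff_false. intros Hhit. apply Bool.not_true_iff_false in Ehit.
      apply Ehit, existsb_exists. exists W. rewrite Hcls, Hhit. auto. }
    rewrite (row_sum_no_hit Sbar W s t Hnohit). reflexivity.
Qed.

Lemma sumS_approx :
  INR (sumS Wbar Sbar s' t') <= INR (sumS Wbar Sbar s t) <=
  INR (sumS Wbar Sbar s' t') + err eps K T Wbar Sbar G s t.
Proof.
  change (sumS Wbar Sbar s t) with (list_sumn (map (fun W => row_sum Sbar W s t) Wbar)).
  change (sumS Wbar Sbar s' t') with (list_sumn (map (fun W => row_sum Sbar W s' t') Wbar)).
  split.
  - apply le_INR, list_sumn_le. intros W HW. apply (row_gap W HW).
  - rewrite (list_sumn_split (fun W => row_sum Sbar W s' t') (fun W => row_sum Sbar W s t))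
      by (intros W HW; apply (row_gap W HW)).
    rewrite plus_INR. apply Rplus_le_compat_l.
    eapply Rle_trans.
    { apply le_INR, (list_sumn_by_class (fun g W => in_classb eps (fst g) (snd g) W)).
      intros W HW. destruct (row_has_class eps W) as [c' [p' Hc]]; [lra|auto|].
      exists (c', p'). split; [exact (HG c' p' W HW Hc)|exact Hc]. }
    unfold err. apply INR_list_sumn_le. intros [c' p'] Hg. exact (class_gap_le c' p' Hg).
Qed.

End Approximation.

Lemma sumS_le_total Wbar Sbar s t : (sumS Wbar Sbar s t <= total Wbar)%nat.
Proof. apply list_sumn_le. intros W _. apply row_sum_le_total. Qed.

Lemma log2_pos (T : nat) : (2 <= T)%nat -> 0 < log2 (INR T).
Proof.
  intros HT. unfold log2. apply Rdiv_lt_0_compat; rewrite <- ln_1; apply ln_increasing; try lra.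
  apply (lt_INR 1). lia.
Qed.

Lemma grid_size_bound (nx ny : nat) (Q : R) :
  INR nx <= 8 * Q -> INR ny <= 8 * Q -> INR (S nx * S ny) <= 128 * (1 + Q ^ 2).
Proof.
  intros Hx Hy. rewrite mult_INR, !S_INR.
  pose proof (pos_INR nx). pose proof (pos_INR ny).
  assert ((INR nx + 1) * (INR ny + 1) <= (8 * Q + 1) * (8 * Q + 1)) by (apply Rmult_le_compat; lra).
  nra.
Qed.

Theorem lemma19 :
  exists C : R, 0 < C /\
  forall (eps K : R) (T abar bbar : nat) (Wbar : list (list rect))
         (G : list (R * Z)) (Sbar : rect -> bool),
    0 < eps < 1 -> 1 <= K -> (2 <= T)%nat -> (abar < bbar)%nat ->
    (forall W, In W Wbar -> valid_row W) ->
    NoDup (map row_j Wbar) ->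
    (forall W, In W Wbar -> spans abar bbar W) ->
    NoDup G ->
    (forall c' p' W, In W Wbar -> in_classb eps c' p' W = true -> In (c', p') G) ->
    (forall Rc, Sbar Rc = true -> exists W, In W Wbar /\ In Rc W) ->
    (forall W Rc Rc', In W Wbar -> In Rc W -> In Rc' W ->
        Sbar Rc = true -> (rr Rc' <= rl Rc)%nat -> Sbar Rc' = true) ->
    exists (f : nat -> nat -> nat) (bs : list box),
      step_fun abar bbar f bs /\
      INR (length bs) <= C * (1 + (K * INR (length G) * log2 (INR T) / eps) ^ 2) /\
      (forall t s, (f t s <= total Wbar)%nat) /\
      (forall t s, in_Abar abar bbar t s ->
         INR (f t s) <= INR (sumS Wbar Sbar s t) /\
         INR (sumS Wbar Sbar s t) <= INR (f t s) + err eps K T Wbar Sbar G s t).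
Proof.
  exists 128. split; [lra|].
  intros eps K T abar bbar Wbar G Sbar Heps HK HT _ Hrows _ Hspan _ HG _ Hpre.
  pose proof (log2_pos T HT) as HlogT.
  set (dl := eps / (2 * K * log2 (INR T))).
  assert (Hdl : 0 < dl) by (apply Rdiv_lt_0_compat; [lra|apply Rmult_lt_0_compat; lra]).
  destruct (class_cuts_exist (s_end Sbar) eps dl Wbar Sbar G Hdl) as [cutsX [HlenX HcutsX]].
  destruct (class_cuts_exist row_j eps dl Wbar Sbar G Hdl) as [cutsY [HlenY HcutsY]].
  replace (4 / dl * INR (length G)) with (8 * (K * INR (length G) * log2 (INR T) / eps))
    in HlenX, HlenY by (unfold dl; field; lra).
  exists (grid_fun abar bbar cutsX cutsY (sumS Wbar Sbar)), (grid_boxes abar bbar cutsX cutsY).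
  split; [apply grid_step_fun|split; [|split]].
  - eapply Rle_trans; [apply le_INR, grid_boxes_length|]. apply grid_size_bound; assumption.
  - intros t s. apply sumS_le_total.
  - intros t s Hts.
    destruct (grid_fun_point abar bbar cutsX cutsY (sumS Wbar Sbar) t s Hts)
      as [t' [s' [-> [Ht' [HfX [Hs' HfY]]]]]].
    unfold in_Abar in Hts.
    apply (sumS_approx eps K T abar bbar Wbar G Sbar Heps (Rlt_le _ _ Hdl) Hrows Hspan HG
             (fun W HW Rc Rc' => Hpre W Rc Rc' HW) cutsX cutsY); auto; lia.
Qed.
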